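(* Let $(L,\le,(\sqsubseteq_\alpha)_{\alpha<\kappa})$ be a model of Axioms 1–4. For all $x,y\in L$ and $\alpha<\kappa$: - $x=_\alpha y$ iff $x|_\alpha=_\alpha y|_\alpha$ iff $x|_\alpha=y|_\alpha$; - $x\sqsubset_\alpha y$ iff $x|_\alpha\sqsubset_\alpha y|_\alpha$; - $x\sqsubseteq_\alpha y$ iff $x|_\alpha\sqsubseteq_\alpha y|_\alpha$.
   Context: Setting (model of Axioms 1–4). Let $(L,\le)$ be a complete lattice with join operation $\bigvee$ and least element $\perp$. Let $\kappa>0$ be an ordinal, and for each ordinal $\alpha<\kappa$ let $\sqsubseteq_\alpha$ be a preorder on $L$. Derived relations: - $x=_\alpha y$ means $x\sqsubseteq_\alpha y$ and $y\sqsubseteq_\alpha x$. - $x\sqsubset_\alpha y$ means $x\sqsubseteq_\alpha y$ and not $x=_\alpha y$. Derived set, for $x\in L$ and $\alpha<\kappa$: $(x]_\alpha=\{y\in L:\forall\beta<\alpha,\ x=_\beta y\}$. For a set $X$, $X\sqsubseteq_\alpha y$ means $x\sqsubseteq_\alpha y$ for all $x\in X$. The structure is a model of Axioms 1–4 if: - (A1) for all $\alpha<\beta<\kappa$, $x\sqsubseteq_\beta y$ implies $x=_\alpha y$; - (A2) $\bigcap_{\alpha<\kappa}=_\alpha$ is the identity relation on $L$; - (A3) for every $x\in L$, every $\alpha<\kappa$ and every $X\subseteq(x]_\alpha$ there is $y\in(x]_\alpha$ with $X\sqsubseteq_\alpha y$ such that for all $z\in(x]_\alpha$ with $X\sqsubseteq_\alpha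 z$ we have $y\sqsubseteq_\alpha z$ and $y\le z$; - (A4) for every nonempty $X\subseteq L$, every $\alpha<\kappa$ and every $y\in L$, if $y=_\alpha x$ for all $x\in X$ then $y=_\alpha\bigvee X$. The element $y$ of (A3) is unique and is denoted $\bigsqcup_\alpha X$. The slice of $x$ at $\alpha$ is $x|_\alpha:=\bigsqcup_\alpha\{x\}$, where $\{x\}\subseteq(x]_\alpha$. *)

From Stdlib Require Import Classical.

(* Ordinals below kappa: encoded as a type K with a strict well-order lt
   (irreflexive, transitive, total, well-founded); kappa > 0 means K inhabited. *)
Definition is_ordinal_index (K : Type) (lt : K -> K -> Prop) : Prop :=
  (forall a, ~ lt a a) /\
  (forall a b c, lt a b -> lt b c -> lt a c) /\
  (forall a b, lt a b \/ a = b \/ lt b a) /\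
  well_founded lt /\
  inhabited K.

Definition is_complete_lattice (L : Type) (le : L -> L -> Prop)
    (join : (L -> Prop) -> L) : Prop :=
  (forall x, le x x) /\
  (forall x y, le x y -> le y x -> x = y) /\
  (forall x y z, le x y -> le y z -> le x z) /\
  (forall (X : L -> Prop), (forall x, X x -> le x (join X)) /\
     (forall u, (forall x, X x -> le x u) -> le (join X) u)).

Section Derived.
Context {L K : Type} (lt : K -> K -> Prop) (sq : K -> L -> L -> Prop).

Definition sq_eq (a : K) (x y : L) : Prop := sq a x y /\ sq a y x.
Definition sq_lt (a : K) (x y : L) : Prop := sq a x y /\ ~ sq_eq a x y.
Definition cone (x : L) (a : K) (y : L) : Prop :=
  forall b, lt b a -> sq_eq b x y.
Definition set_sq (a : K) (X : L -> Prop) (y : L) : Prop :=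
  forall x, X x -> sq a x y.
Definition is_A3_sup (le : L -> L -> Prop) (x : L) (a : K) (X : L -> Prop) (y : L)
  : Prop :=
  cone x a y /\ set_sq a X y /\
  (forall z, cone x a z -> set_sq a X z -> sq a y z /\ le y z).
End Derived.

Definition model_A1_4 (L K : Type) (le : L -> L -> Prop) (join : (L -> Prop) -> L)
    (lt : K -> K -> Prop) (sq : K -> L -> L -> Prop) : Prop :=
  is_complete_lattice L le join /\
  is_ordinal_index K lt /\
  (forall a x, sq a x x) /\
  (forall a x y z, sq a x y -> sq a y z -> sq a x z) /\
  (* A1 *)
  (forall a b x y, lt a b -> sq b x y -> sq_eq sq a x y) /\
  (* A2 *)
  (forall x y, (forall a, sq_eq sq a x y) -> x = y) /\
  (* A3 *)
  (forall x a (X : L -> Prop), (forall y, X y -> cone lt sq x a y) ->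
     exists y, is_A3_sup lt sq le x a X y) /\
  (* A4 *)
  (forall (X : L -> Prop) a y, (exists x, X x) ->
     (forall x, X x -> sq_eq sq a y x) -> sq_eq sq a y (join X)).

(* s is the slice x|_a := ⊔_a {x} (unique by A3). *)
Definition is_slice {L K : Type} (le : L -> L -> Prop) (lt : K -> K -> Prop)
    (sq : K -> L -> L -> Prop) (x : L) (a : K) (s : L) : Prop :=
  is_A3_sup lt sq le x a (fun z => z = x) s.


(* The slice s = x|_a is =_a-equivalent to x (it is ⊑_a-above x, and x itself
   is an admissible upper bound in (x]_a, so s ⊑_a x by minimality).  Hence
   ⊑_a, =_a and ⊏_a are invariant under replacing x, y by their slices.
   For the remaining equivalence x|_a =_a y|_a <-> x|_a = y|_a: if x =_a y,
   then A1 moves y|_a into the cone (x]_a, where it is an ⊑_a-upper bound of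
   {x}; minimality of x|_a gives x|_a <= y|_a, symmetrically y|_a <= x|_a, and
   antisymmetry of <= concludes. *)

Section Slices.
Variables (L K : Type) (le : L -> L -> Prop) (lt : K -> K -> Prop)
  (sq : K -> L -> L -> Prop).
Hypothesis le_antisym : forall x y, le x y -> le y x -> x = y.
Hypothesis sq_refl : forall a x, sq a x x.
Hypothesis sq_trans : forall a x y z, sq a x y -> sq a y z -> sq a x z.
Hypothesis sq_A1 : forall a b x y, lt a b -> sq b x y -> sq_eq sq a x y.

Lemma sq_eq_refl (a : K) (x : L) : sq_eq sq a x x.
Proof. split; apply sq_refl. Qed.

Lemma sq_eq_trans (a : K) (x y z : L) :
  sq_eq sq a x y -> sq_eq sq a y z -> sq_eq sq a x z.
Proof. intros [H1 H2] [H3 H4]; split; eauto. Qed.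

Lemma cone_self (x : L) (a : K) : cone lt sq x a x.
Proof. intros b _; apply sq_eq_refl. Qed.

(* By A1, x ⊑_a y makes x and y agree below a, so (y]_a ⊆ (x]_a. *)
Lemma cone_transfer (x y z : L) (a : K) :
  sq a x y -> cone lt sq y a z -> cone lt sq x a z.
Proof.
  intros Hxy Hz b Hb.
  apply sq_eq_trans with y; [exact (sq_A1 b a x y Hb Hxy) | exact (Hz b Hb)].
Qed.

Lemma slice_sq_eq (x : L) (a : K) (s : L) :
  is_slice le lt sq x a s -> sq_eq sq a x s.
Proof.
  intros [_ [Hub Hmin]]; split.
  - apply Hub; reflexivity.
  - apply (Hmin x (cone_self x a)). intros w ->; apply sq_refl.
Qed.

Section TwoSlices.
Variables (x y : L) (a : K) (sx sy : L).
Hypothesis Sx : is_slice le lt sq x a sx.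
Hypothesis Sy : is_slice le lt sq y a sy.

Lemma sq_slice_iff : sq a x y <-> sq a sx sy.
Proof.
  destruct (slice_sq_eq x a sx Sx) as [x1 x2].
  destruct (slice_sq_eq y a sy Sy) as [y1 y2].
  split; intro H; eauto.
Qed.

Lemma sq_eq_slice_iff : sq_eq sq a x y <-> sq_eq sq a sx sy.
Proof.
  destruct (slice_sq_eq x a sx Sx) as [x1 x2].
  destruct (slice_sq_eq y a sy Sy) as [y1 y2].
  unfold sq_eq; split; intros [H1 H2]; split; eauto.
Qed.

Lemma sq_lt_slice_iff : sq_lt sq a x y <-> sq_lt sq a sx sy.
Proof.
  unfold sq_lt; rewrite sq_slice_iff, sq_eq_slice_iff; tauto.
Qed.

(* Minimality: if x ⊑_a y, then y|_a is a competitor in (x]_a above x,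
   so x|_a <= y|_a. *)
Lemma slice_le_of_sq : sq a x y -> le sx sy.
Proof.
  intros Hxy.
  destruct Sx as [_ [_ Hmin]].
  destruct Sy as [Hcone _].
  destruct (slice_sq_eq y a sy Sy) as [y1 _].
  apply (Hmin sy).
  - exact (cone_transfer x y sy a Hxy Hcone).
  - intros w ->; eauto.
Qed.
End TwoSlices.

Lemma slice_eq_of_sq_eq (x y : L) (a : K) (sx sy : L) :
  is_slice le lt sq x a sx -> is_slice le lt sq y a sy ->
  sq_eq sq a x y -> sx = sy.
Proof.
  intros Sx Sy [Hxy Hyx].
  apply le_antisym; [exact (slice_le_of_sq x y a sx sy Sx Sy Hxy)
                    | exact (slice_le_of_sq y x a sy sx Sy Sx Hyx)].
Qed.
End Slices.

Theorem mainTheorem7 (L K : Type) (le : L -> L -> Prop) (join : (L -> Prop) -> L)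
    (lt : K -> K -> Prop) (sq : K -> L -> L -> Prop) :
  model_A1_4 L K le join lt sq ->
  forall (x y : L) (a : K) (sx sy : L),
    is_slice le lt sq x a sx -> is_slice le lt sq y a sy ->
    ((sq_eq sq a x y <-> sq_eq sq a sx sy) /\ (sq_eq sq a sx sy <-> sx = sy)) /\
    (sq_lt sq a x y <-> sq_lt sq a sx sy) /\
    (sq a x y <-> sq a sx sy).
Proof.
  intros [[_ [le_antisym _]] [_ [sq_refl [sq_trans [sq_A1 _]]]]]
         x y a sx sy Sx Sy.
  pose proof (sq_eq_slice_iff L K le lt sq sq_refl sq_trans x y a sx sy Sx Sy)
    as Heq.
  split; [split; [exact Heq | split] | split].
  - intro H. apply (slice_eq_of_sq_eq L K le lt sq le_antisym sq_refl sq_trans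
                      sq_A1 x y a sx sy Sx Sy), Heq, H.
  - intros ->. apply sq_eq_refl, sq_refl.
  - exact (sq_lt_slice_iff L K le lt sq sq_refl sq_trans x y a sx sy Sx Sy).
  - exact (sq_slice_iff L K le lt sq sq_refl sq_trans x y a sx sy Sx Sy).
Qed.
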